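(* Let $G = (V,E)$ be an unweighted graph with $n$ vertices, let $A_1,\ldots,A_p$ be non-empty subsets of $V$, and let $\ell, \delta \in \mathbb{N}$. Then either (1) there is a tree $T$ in $G$ of depth at most $4\delta\ell\ln n$ and with at most $4\delta\ell p \ln n$ vertices such that $V(T)\cap A_i \neq \emptyset$ for $i = 1,\ldots,p$; or (2) there is a set $S \subset V$ such that (a) $|N^\delta(S)\cap (V\setminus S)| < \min\{|S|,|V\setminus S|\}/\ell$ and (b) $|N^\delta(V\setminus S)\cap S| < \min\{|S|,|V\setminus S|\}/\ell$.
   Context: For $X\subseteq V$, $N(X)$ denotes the set of vertices at distance at most $1$ from $X$ in $G$ (so $X \subseteq N(X)$); $N^1(X) = N(X)$ and $N^\delta(X) = N(N^{\delta-1}(X))$ for $\delta \ge 2$. *)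

From mathcomp Require Import all_boot.
From Stdlib Require Import Reals.

Set Implicit Arguments.
Unset Strict Implicit.
Unset Printing Implicit Defensive.

Definition simple_graph (V : finType) (e : rel V) : Prop :=
  symmetric e /\ irreflexive e.

(* N(X): vertices at distance at most 1 from X (so X \subset N X). *)
Definition nbhd (V : finType) (e : rel V) (X : {set V}) : {set V} :=
  [set y | [exists x in X, (x == y) || e x y]].

Definition nbhd_iter (V : finType) (e : rel V) (d : nat) (X : {set V}) : {set V} :=
  iter d (nbhd e) X.

Definition tadj (V : finType) (ET : {set {set V}}) : rel V :=
  fun x y => (x != y) && ([set x; y] \in ET).

Definition subgraph_of (V : finType) (e : rel V) (VT : {set V}) (ET : {set {set V}}) : Prop :=
  forall E, E \in ET -> exists x y, [/\ x != y, E = [set x; y], e x y, x \in VT & y \in VT].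

Definition is_tree (V : finType) (VT : {set V}) (ET : {set {set V}}) : Prop :=
  [/\ VT != set0,
      (forall x y, x \in VT -> y \in VT -> connect (tadj ET) x y) &
      (forall c : seq V, uniq c -> 3 <= size c -> ~~ cycle (tadj ET) c)].

Definition tree_depth_le (V : finType) (VT : {set V}) (ET : {set {set V}}) (d : R) : Prop :=
  exists2 r, r \in VT &
    forall v, v \in VT -> exists s : seq V,
      [/\ path (tadj ET) r s, last r s = v & (INR (size s) <= d)%R].

From mathcomp Require Import all_boot zify.
From Stdlib Require Import Reals Lra Classical.

(* If no sparse cut exists, balls grow geometrically: for B_j = N^(j delta)(u)
   with |B_j| <= n/2, either the outer boundary gives |B_(j+1)| >= (1 + 1/l)|B_j|
   or the inner boundary gives |B_(j-1)| <= (1 - 1/l)|B_j|, so |B_j| grows like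
   exp(j/(2l)).  After O(l ln n) steps the balls around a root and around any
   target exceed n/2 and therefore meet; hence one target in each A_i lies within
   distance 4 delta l ln n of the root, and the breadth-first tree spanned by
   these targets has the required depth and size. *)

Set Implicit Arguments.
Unset Strict Implicit.
Unset Printing Implicit Defensive.

(** * Neighbourhoods *)

Section Neighbourhoods.

Variables (V : finType) (e : rel V).

Lemma nbhdP (X : {set V}) y :
  reflect (exists2 x, x \in X & (x == y) || e x y) (y \in nbhd e X).
Proof. by rewrite inE; apply: (iffP exists_inP). Qed.

Lemma subset_nbhd (X : {set V}) : X \subset nbhd e X.
Proof. by apply/subsetP => x xX; apply/nbhdP; exists x; rewrite ?eqxx. Qed.

Lemma nbhdS (X Y : {set V}) : X \subset Y -> nbhd e X \subset nbhd e Y.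
Proof.
by move=> /subsetP sXY; apply/subsetP => y /nbhdP [x /sXY Yx xy]; apply/nbhdP; exists x.
Qed.

Lemma nbhd_iterS k (X Y : {set V}) :
  X \subset Y -> nbhd_iter e k X \subset nbhd_iter e k Y.
Proof. by elim: k => [|k IHk] //= sXY; apply/nbhdS/IHk. Qed.

Lemma subset_nbhd_iter k (X : {set V}) : X \subset nbhd_iter e k X.
Proof. by elim: k => [|k IHk] //=; apply: subset_trans IHk (subset_nbhd _). Qed.

Lemma nbhd_iterD k m (X : {set V}) :
  nbhd_iter e (k + m) X = nbhd_iter e k (nbhd_iter e m X).
Proof. exact: iterD. Qed.

Lemma nbhd_iter_leq k m (X : {set V}) :
  k <= m -> nbhd_iter e k X \subset nbhd_iter e m X.
Proof. by move=> le_km; rewrite -(subnK le_km) nbhd_iterD subset_nbhd_iter. Qed.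

Lemma nbhd_iter_set1 k (X : {set V}) y :
  y \in nbhd_iter e k X -> exists2 x, x \in X & y \in nbhd_iter e k [set x].
Proof.
elim: k y => [|k IHk] y /=; first by exists y; rewrite ?set11.
by move=> /nbhdP [z /IHk [x Xx zx] zy]; exists x => //; apply/nbhdP; exists z.
Qed.

Hypothesis e_sym : symmetric e.

Lemma nbhd_iter1_sym k x y :
  y \in nbhd_iter e k [set x] -> x \in nbhd_iter e k [set y].
Proof.
elim: k x y => [|k IHk] x y; first by rewrite /= !inE eq_sym.
move=> /nbhdP [z /IHk zy zx]; rewrite -addn1 nbhd_iterD.
apply: subsetP zy; apply: nbhd_iterS; rewrite sub1set.
by apply/nbhdP; exists y; rewrite ?set11 // eq_sym e_sym.
Qed.

Lemma nbhd_iterC_sub d (S P : {set V}) :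
  nbhd_iter e d P \subset S -> nbhd_iter e d (~: S) :&: S \subset S :\: P.
Proof.
move=> sPS; apply/subsetP => y; rewrite !inE => /andP [ScNy Sy].
rewrite Sy andbT; apply/negP => Py.
have [x Scx /nbhd_iter1_sym xNy] := nbhd_iter_set1 ScNy.
have /(subsetP sPS) : x \in nbhd_iter e d P.
  by apply: subsetP xNy; apply: nbhd_iterS; rewrite sub1set.
by rewrite inE in Scx; apply/negP.
Qed.

End Neighbourhoods.

Lemma le_INR_leq m n : m <= n -> (INR m <= INR n)%R.
Proof. by move/leP; apply: le_INR. Qed.

Lemma INR_subn m n : m <= n -> INR (n - m) = (INR n - INR m)%R.
Proof. by move=> le_mn; rewrite -{2}(subnK le_mn) plus_INR; ring. Qed.

Lemma INR_lt_div k m l : 0 < l -> l * k < m -> (INR k < INR m / INR l)%R.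
Proof.
move=> l_gt0 /ltP/lt_INR; rewrite mult_INR => lt_R.
have l_pos : (0 < INR l)%R by apply/lt_0_INR/ltP.
apply: (Rmult_lt_reg_l (INR l)) => //.
by have -> : (INR l * (INR m / INR l) = INR m)%R by field; lra.
Qed.

Definition sparse_cut (V : finType) (e : rel V) (delta l : nat) (S : {set V}) :=
  (INR #|nbhd_iter e delta S :&: ~: S| < INR (minn #|S| #|~: S|) / INR l)%R /\
  (INR #|nbhd_iter e delta (~: S) :&: S| < INR (minn #|S| #|~: S|) / INR l)%R.

Section SparseCuts.

Variables (V : finType) (e : rel V) (delta l : nat) (S : {set V}).
Hypothesis l_gt0 : 0 < l.

Lemma not_sparse_cut : ~ sparse_cut e delta l S ->
  minn #|S| #|~: S| <= l * #|nbhd_iter e delta S :&: ~: S| \/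
  minn #|S| #|~: S| <= l * #|nbhd_iter e delta (~: S) :&: S|.
Proof.
move=> not_cut.
case: leqP => [|lt_out]; first by left.
case: leqP => [|lt_in]; first by right.
by case: not_cut; split; apply: INR_lt_div.
Qed.

Lemma sparse_cut0 : 0 < #|S| < #|V| -> sparse_cut e 0 l S.
Proof.
move=> /andP [S_gt0 S_ltV].
have min_gt0 : l * 0 < minn #|S| #|~: S|.
  by rewrite muln0 leq_min S_gt0 cardsCs subn_gt0 setCK.
by rewrite /sparse_cut /= setICr setIC setICr cards0; split; apply: INR_lt_div.
Qed.

End SparseCuts.

(** * Numerical estimates *)

(* A step either multiplies [x] by at least [1 + 1/r] or shows that the previous
   step multiplied it by at least [r/(r-1)]; [c] is below both factors and [c^2]
   below the second one, so two steps gain [c^2] whichever case occurs. *)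
Lemma geometric_growth (r c : R) (x : nat -> R) (M : nat) :
  (1 <= r)%R -> (1 <= c <= 2)%R -> (r * c <= r + 1)%R -> ((r - 1) * (c * c) <= r)%R ->
  x 0 = 1%R -> (2 <= x 1%nat)%R -> (forall j, x j <= x j.+1)%R ->
  (forall j : nat, (0 < j < M)%nat ->
     x j <= r * (x j.+1 - x j) \/ x j <= r * (x j - x j.-1))%R ->
  (c ^ M <= x M)%R.
Proof.
move=> r_ge1 [c_ge1 c_le2] c_out c_in x0 x1 x_incr x_step.
have x_ge0 j : (0 <= x j)%R.
  by elim: j => [|j IHj]; [rewrite x0; lra | apply: Rle_trans (x_incr j)].
suff /(_ M) [+ _] : forall m : nat,
    ((m <= M)%nat -> (c ^ m <= x m)%R) /\ ((m.+1 <= M)%nat -> (c ^ m.+1 <= x m.+1)%R).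
  exact.
elim=> [|m [IHm IHm1]]; first by split=> _ /=; lra.
split=> // lt_m2_M.
have cm_ge0 : (0 <= c ^ m)%R by apply: pow_le; lra.
have c2_ge0 : (0 <= c * c)%R by nra.
have [out|inn] := x_step m.+1 lt_m2_M.
- have cx : (r * (c * x m.+1) <= r * x m.+2)%R.
    have := Rmult_le_compat_r _ _ _ (x_ge0 m.+1) c_out; lra.
  have := IHm1 (ltnW lt_m2_M); rewrite /= in out *.
  have := Rmult_le_reg_l r _ _ ltac:(lra) cx; nra.
- have cx : (r * (c * c * x m) <= r * x m.+1)%R.
    rewrite /= in inn.
    have : (r * x m <= (r - 1) * x m.+1)%R by lra.
    have := Rmult_le_compat_r _ _ _ (x_ge0 m.+1) c_in; nra.
  have := IHm (ltnW (ltnW lt_m2_M)); have := x_incr m.+1.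
  have := Rmult_le_reg_l r _ _ ltac:(lra) cx; rewrite /=; nra.
Qed.

Lemma exp_mul_1m_le1 y : (exp y * (1 - y) <= 1)%R.
Proof.
have := exp_ineq1_le (- y); have := exp_pos y.
have : (exp y * exp (- y) = 1)%R by rewrite -exp_plus Rplus_opp_r exp_0.
nra.
Qed.

(* [exp (1/(2l))] is below [1 + 1/l] and its square below [l/(l-1)]; for [l = 1]
   only the first constraint exists, and [radius_sum_bound] needs the ratio [2]. *)
Definition rate (l : nat) : R := if l == 1 then 2%R else exp (/ (2 * INR l)).

Lemma rate_spec l : 0 < l ->
  [/\ (1 <= rate l <= 2)%R, (INR l * rate l <= INR l + 1)%R
    & ((INR l - 1) * (rate l * rate l) <= INR l)%R].
Proof.
rewrite /rate; case: eqP => [-> _ | /eqP l_neq1 l_gt0]; first by rewrite /=; split; lra.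
have l_ge2 : (2 <= INR l)%R by apply: (le_INR_leq (n := l) (m := 2)); lia.
set y := (/ (2 * INR l))%R.
have y_l : (2 * INR l * y = 1)%R by rewrite /y; field; lra.
have y_pos : (0 < y)%R by apply: Rinv_0_lt_compat; lra.
have y_small : (y <= 1/4)%R.
  by apply: (Rmult_le_reg_l (2 * INR l)); [lra | rewrite y_l; lra].
have exp_ge1 := exp_ineq1_le y.
have exp_le : (exp y <= 1 + 2 * y)%R.
  by have := exp_mul_1m_le1 y; nra.
have exp2_le : (exp y * exp y * (1 - 2 * y) <= 1)%R.
  have -> : (exp y * exp y = exp (2 * y))%R by rewrite -exp_plus; f_equal; ring.
  exact: exp_mul_1m_le1.
by split; nra.
Qed.

Lemma ln_le x y : (0 < x)%R -> (x <= y)%R -> (ln x <= ln y)%R.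
Proof. by move=> x_pos [/ln_increasing lt_xy | ->]; [left; apply: lt_xy | right]. Qed.

Lemma ln_ge_of_exp a x : (0 < x)%R -> (exp a <= x)%R -> (a <= ln x)%R.
Proof. by move=> x_pos /ln_le; rewrite ln_exp; apply; apply: exp_pos. Qed.

Lemma exp_mulINR k x : exp (INR k * x) = (exp x ^ k)%R.
Proof.
elim: k => [|k IHk]; first by rewrite Rmult_0_l exp_0.
by rewrite S_INR Rmult_plus_distr_r Rmult_1_l exp_plus IHk /=; ring.
Qed.

Lemma ln2_ge : (2 / 3 <= ln 2)%R.
Proof.
apply: ln_ge_of_exp; first lra.
have e24_le : (exp (1 / 24) <= 24 / 23)%R.
  by have := exp_mul_1m_le1 (1 / 24); have := exp_pos (1 / 24); lra.
have -> : (2 / 3 = INR 16 * (1 / 24))%R by rewrite /=; field.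
rewrite exp_mulINR; apply: Rle_trans (pow_incr _ (24 / 23) 16 _) _.
  by have := exp_pos (1 / 24); lra.
by rewrite /=; lra.
Qed.

Lemma ln_pow_mul2_le c X j :
  (0 < c)%R -> (c ^ j * 2 <= X)%R -> (INR j * ln c + ln 2 <= ln X)%R.
Proof.
move=> c_pos le_X; have cj_pos : (0 < c ^ j)%R by apply: pow_lt.
by rewrite -ln_pow // -ln_mult //; [apply: ln_le => //; lra | lra].
Qed.

Lemma INR_pred n : 0 < n -> INR n.-1 = (INR n - 1)%R.
Proof. by case: n => // n _; rewrite S_INR /=; ring. Qed.

Lemma radius_le_rate1 X (j : nat) :
  (1 <= X)%R -> j = 0 \/ (2 ^ j.-1 * 2 <= X)%R -> (INR j * ln 2 <= ln X)%R.
Proof.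
move=> X_ge1 j_bd; have lnX_ge0 : (0 <= ln X)%R by rewrite -ln_1; apply: ln_le; lra.
case: j_bd => [-> | ]; first by rewrite Rmult_0_l.
case: j => [|j] le_X; first by rewrite Rmult_0_l.
by rewrite S_INR; have := ln_pow_mul2_le (c := 2) (j := j) ltac:(lra) le_X; lra.
Qed.

Lemma radius_le_rate l n X (j : nat) : 2 <= l -> (2 <= INR n)%R -> (0 < X <= INR n)%R ->
  j = 0 \/ (exp (/ (2 * INR l)) ^ j.-1 * 2 <= X)%R ->
  (INR j <= 1 + 2 * INR l * (ln (INR n) - ln 2))%R.
Proof.
move=> l_ge2 n_ge2 [X_pos X_le] j_bd.
have l_ge2R : (2 <= INR l)%R by apply: (le_INR_leq (m := 2)).
have lnn_ge : (ln 2 <= ln (INR n))%R by apply: ln_le; lra.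
have lnX_le : (ln X <= ln (INR n))%R by apply: ln_le.
case: j_bd => [-> | ]; first by rewrite /=; nra.
case: j => [|j] le_X; first by rewrite /=; nra.
have := ln_pow_mul2_le (j := j) (exp_pos _) le_X; rewrite ln_exp S_INR => ln_le_X.
have : (INR j * / (2 * INR l) * (2 * INR l) <= (ln (INR n) - ln 2) * (2 * INR l))%R.
  by apply: Rmult_le_compat_r; lra.
by rewrite (_ : _ * _ * _ = INR j)%R; [lra | field; lra].
Qed.

(* The [h] radius is measured against [n], the [g] radius against [n - 1]: for
   [l = 1] and [n = 2] this forces [g = 0], which the bound needs. *)
Lemma radius_sum_bound n l h g : 2 <= n -> 0 < l ->
  (h = 0 \/ (rate l ^ h.-1 * 2 <= INR n)%R) ->
  (g = 0 \/ (rate l ^ g.-1 * 2 <= INR n.-1)%R) ->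
  (INR (h + g).+1 <= 4 * INR l * ln (INR n))%R.
Proof.
move=> n_ge2 l_gt0 h_bd g_bd.
have ln2 := ln2_ge.
have n_ge2R : (2 <= INR n)%R by apply: (le_INR_leq (m := 2)).
have lnn_ge : (ln 2 <= ln (INR n))%R by apply: ln_le; lra.
have n1_le : (0 < INR n.-1 <= INR n)%R by rewrite INR_pred; [lra | lia].
rewrite S_INR plus_INR; move: h_bd g_bd; rewrite /rate.
case: eqP => [-> | /eqP l_neq1] h_bd g_bd; last first.
  have l_ge2 : 2 <= l by lia.
  have l_ge2R : (2 <= INR l)%R by apply: (le_INR_leq (m := 2)).
  have := radius_le_rate (X := INR n) l_ge2 n_ge2R ltac:(lra) h_bd.
  have := radius_le_rate l_ge2 n_ge2R n1_le g_bd.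
  nra.
have h_le := radius_le_rate1 (X := INR n) ltac:(lra) h_bd.
case: g_bd => [-> | g_bd]; first by rewrite /=; nra.
have n1_ge2 : (2 <= INR n.-1)%R.
  case: g g_bd => [|g] /= g_bd; first lra.
  by have := pow_R1_Rle 2 g; lra.
have lnn_ge1 : (1 <= ln (INR n))%R.
  rewrite INR_pred in n1_ge2; last lia.
  by apply: ln_ge_of_exp; have := exp_le_3; lra.
have g_le := radius_le_rate1 (X := INR n.-1) ltac:(lra) (or_intror g_bd).
have : (ln (INR n.-1) <= ln (INR n))%R by apply: ln_le; lra.
rewrite /=; nra.
Qed.

(** * Growth of balls in the absence of sparse cuts *)

Section Balls.

Variables (V : finType) (e : rel V) (delta l : nat).
Hypotheses (e_sym : symmetric e) (V_gt1 : 1 < #|V|) (l_gt0 : 0 < l).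
Hypothesis expanding : forall S : {set V},
  minn #|S| #|~: S| <= l * #|nbhd_iter e delta S :&: ~: S| \/
  minn #|S| #|~: S| <= l * #|nbhd_iter e delta (~: S) :&: S|.

Definition ball (u : V) (j : nat) := nbhd_iter e (j * delta) [set u].

Lemma ballS u j : ball u j.+1 = nbhd_iter e delta (ball u j).
Proof. by rewrite /ball mulSn nbhd_iterD. Qed.

Lemma ball_subS u j : ball u j \subset ball u j.+1.
Proof. by rewrite ballS subset_nbhd_iter. Qed.

Lemma card_ball0 u : #|ball u 0| = 1.
Proof. exact: cards1. Qed.

Lemma card_ball_gt0 u j : 0 < #|ball u j|.
Proof.
by apply/card_gt0P; exists u; apply: subsetP (subset_nbhd_iter _ _ _) _ (set11 u).
Qed.

Lemma card_ball_incr u j : #|ball u j| <= #|ball u j.+1|.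
Proof. exact/subset_leq_card/ball_subS. Qed.

Lemma minn_card_ball_gt0 u j :
  #|ball u j| < #|V| -> 0 < minn #|ball u j| #|~: ball u j|.
Proof.
by have := cardsC (ball u j); have := card_ball_gt0 u j; rewrite leq_min; lia.
Qed.

Lemma card_ballS_gt u j : #|ball u j| < #|V| -> #|ball u j| < #|ball u j.+1|.
Proof.
move=> /minn_card_ball_gt0 min_gt0; rewrite ltnNge; apply/negP => le_card.
have eq_ball : ball u j.+1 = ball u j.
  by apply/eqP; rewrite eq_sym eqEcard ball_subS.
have out0 : nbhd_iter e delta (ball u j) :&: ~: ball u j = set0.
  by rewrite -ballS eq_ball setICr.
have in0 : nbhd_iter e delta (~: ball u j) :&: ball u j = set0.
  apply/eqP; rewrite -subset0 -(setDv (ball u j)).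
  by apply: nbhd_iterC_sub; rewrite // -ballS eq_ball.
by case: (expanding (ball u j)); rewrite ?out0 ?in0 cards0 muln0 leqNgt min_gt0.
Qed.

Lemma card_ball_ge u j : minn j.+1 #|V| <= #|ball u j|.
Proof.
elim: j => [|j IHj]; first by rewrite card_ball0 geq_minl.
have [/card_ballS_gt | ge_V] := ltnP #|ball u j| #|V|; first lia.
by have := card_ball_incr u j; lia.
Qed.

Lemma ball_expansion_step u j : 0 < j -> 2 * #|ball u j| <= #|V| ->
  #|ball u j| <= l * (#|ball u j.+1| - #|ball u j|) \/
  #|ball u j| <= l * (#|ball u j| - #|ball u j.-1|).
Proof.
move=> j_gt0 half_V.
have min_ball : minn #|ball u j| #|~: ball u j| = #|ball u j|.
  by apply/minn_idPl; have := cardsC (ball u j); lia.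
have out_card :
    #|nbhd_iter e delta (ball u j) :&: ~: ball u j| = #|ball u j.+1| - #|ball u j|.
  by rewrite -ballS -setDE cardsDS // ball_subS.
have prev_sub : ball u j.-1 \subset ball u j by rewrite -{2}(prednK j_gt0) ball_subS.
have in_card :
    #|nbhd_iter e delta (~: ball u j) :&: ball u j| <= #|ball u j| - #|ball u j.-1|.
  rewrite -cardsDS //; apply/subset_leq_card/nbhd_iterC_sub => //.
  by rewrite -ballS prednK.
case: (expanding (ball u j)); rewrite min_ball ?out_card => le_in; [by left | right].
by apply: leq_trans le_in _; rewrite leq_mul2l in_card orbT.
Qed.

Lemma card_ball_growth u m : (forall i, i < m -> 2 * #|ball u i| <= #|V|) ->
  (rate l ^ m <= INR #|ball u m|)%R.
Proof.
move=> half_V; have [rate_bd rate_out rate_in] := rate_spec l_gt0.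
apply: (geometric_growth (x := fun i => INR #|ball u i|) _ rate_bd rate_out rate_in).
- exact: (le_INR_leq (m := 1)).
- by rewrite card_ball0.
- apply: (le_INR_leq (m := 2)).
  by have := @card_ballS_gt u 0; rewrite card_ball0; apply.
- by move=> j; apply/le_INR_leq/card_ball_incr.
move=> j /andP [j_gt0 lt_jm].
have prev_le : #|ball u j.-1| <= #|ball u j|.
  by rewrite -{2}(prednK j_gt0) card_ball_incr.
have [out|inn] := ball_expansion_step j_gt0 (half_V j lt_jm); [left | right];
  rewrite -INR_subn ?card_ball_incr // -mult_INR; exact: le_INR_leq.
Qed.

Lemma exists_radius u k : k <= #|V|.+1 ->
  exists j, k <= 2 * #|ball u j| /\ (j = 0 \/ (rate l ^ j.-1 * 2 <= INR k.-1)%R).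
Proof.
move=> k_le.
have ex_j : exists j, k <= 2 * #|ball u j|.
  by exists #|V|; have := card_ball_ge u #|V|; lia.
have [j large_j min_j] := ex_minnP ex_j.
exists j; split=> //; case: j large_j min_j => [|j] _ min_j; [by left | right].
have small i : i <= j -> 2 * #|ball u i| <= k.-1.
  move=> le_ij; have := contraNN (min_j i); rewrite -leqNgt -ltnNge => /(_ le_ij); lia.
have half_V i : i < j -> 2 * #|ball u i| <= #|V|.
  by move=> lt_ij; have := small i (ltnW lt_ij); lia.
have := card_ball_growth half_V.
by have := le_INR_leq (small j (leqnn j)); rewrite mult_INR /=; lra.
Qed.

Lemma ball_meet u w h g : #|V| < #|ball u h| + #|ball w g| ->
  w \in nbhd_iter e ((h + g) * delta) [set u].
Proof.
move=> big_balls.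
have [x] : exists x, x \in ball u h :&: ball w g.
  apply/set0Pn; apply: contraTneq big_balls => disj.
  by rewrite -cardsUI disj cards0 addn0 -leqNgt max_card.
rewrite inE => /andP [x_u /(nbhd_iter1_sym e_sym) w_x].
have sub_x : nbhd_iter e (g * delta) [set x] \subset nbhd_iter e (g * delta) (ball u h).
  by apply: nbhd_iterS; rewrite sub1set.
by rewrite mulnDl addnC nbhd_iterD; apply: (subsetP sub_x).
Qed.

Lemma targets_near (I : finType) (t : I -> V) u : exists K,
  (forall i, t i \in nbhd_iter e K [set u]) /\
  (INR (K + delta) <= 4 * INR delta * INR l * ln (INR #|V|))%R.
Proof.
have [h [large_h h_bd]] := exists_radius u (leqnn #|V|.+1).
have /fin_all_exists [g g_spec] := fun i => exists_radius (t i) (leqnSn #|V|).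
pose G := \max_i g i.
have G_bd : G = 0 \/ (rate l ^ G.-1 * 2 <= INR #|V|.-1)%R.
  rewrite /G; elim/big_ind: _ => [|x y x_bd y_bd|i _]; first by left.
    by rewrite /maxn; case: ltnP.
  exact: (g_spec i).2.
exists ((h + G) * delta); split.
  move=> i; have [large_g _] := g_spec i.
  have near_i : t i \in nbhd_iter e ((h + g i) * delta) [set u].
    by apply: ball_meet; lia.
  apply: subsetP near_i; apply: nbhd_iter_leq.
  by rewrite leq_mul2r leq_add2l leq_bigmax orbT.
have := radius_sum_bound V_gt1 l_gt0 h_bd G_bd.
rewrite -mulSnr mult_INR; have := pos_INR delta; nra.
Qed.

End Balls.

(** * Breadth-first trees *)

Lemma next_neq_prev (T : eqType) (c : seq T) x :
  uniq c -> x \in c -> 3 <= size c -> next c x != prev c x.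
Proof.
move=> uniq_c c_x size_c.
rewrite -(next_rot (index x c) uniq_c) -(prev_rot (index x c) uniq_c).
have := size_c; rewrite -(size_rot (index x c)); have := uniq_c.
rewrite -(rot_uniq (index x c)) (rot_index c_x).
case: (_ ++ _) => [|a [|b t]] // + _.
rewrite cons_uniq => /andP [x_notin]; rewrite cons_uniq => /andP [a_notin _].
rewrite next_nth prev_nth mem_head (memNindex x_notin) [index _ _]/= eqxx [nth _ _ _]/=.
apply: contraNneq a_notin => ->; rewrite [size _]/= [nth _ _ _]/=; exact: mem_nth.
Qed.

Lemma tadj_sym (V : finType) (ET : {set {set V}}) : symmetric (tadj ET).
Proof. by move=> x y; rewrite /tadj eq_sym setUC. Qed.

Section BfsTree.

Variables (V : finType) (e : rel V) (v : V) (K : nat).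
Hypothesis e_sym : symmetric e.

Local Notation N k := (nbhd_iter e k [set v]).

(* The distance from [v] when it is at most [K], and [K.+1] otherwise. *)
Definition level (w : V) := find (fun k => w \in N k) (iota 0 K.+1).

Section Level.

Variable w : V.
Hypothesis w_near : w \in N K.

Let has_level : has (fun k => w \in N k) (iota 0 K.+1).
Proof. by apply/hasP; exists K; rewrite // mem_iota add0n ltnS leqnn. Qed.

Lemma level_leq : level w <= K.
Proof. by have := has_level; rewrite has_find size_iota. Qed.

Lemma mem_level : w \in N (level w).
Proof. by have := nth_find 0 has_level; rewrite nth_iota ?add0n // ltnS level_leq. Qed.

Lemma level_eq0 : level w = 0 -> w = v.
Proof. by move=> level0; have := mem_level; rewrite level0 inE => /eqP. Qed.

End Level.

Lemma level_min w k : k <= K -> w \in N k -> level w <= k.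
Proof.
move=> le_kK w_k; rewrite leqNgt; apply/negP => /(before_find 0).
by rewrite nth_iota ?add0n ?w_k // ltnS.
Qed.

Lemma level_root : level v = 0.
Proof. by apply/eqP; rewrite -leqn0 level_min // inE. Qed.

Lemma exists_parent w : w \in N K -> 0 < level w ->
  exists z, [&& z \in N K, level z == (level w).-1 & e z w].
Proof.
move=> w_near level_gt0; have le_K := level_leq w_near.
have : w \in N (level w).-1.+1 by rewrite prednK // mem_level.
move=> /nbhdP [z z_N zw]; have {}z_N : z \in N (level w).-1 := z_N.
have w_notin : w \notin N (level w).-1.
  apply/negP => w_in; have := level_min (k := (level w).-1) ltac:(lia) w_in; lia.
have {zw} e_zw : e z w.
  by case/orP: zw => // /eqP eq_zw; case/negP: w_notin; rewrite -{1}eq_zw.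
have z_near : z \in N K by apply: subsetP z_N; apply: nbhd_iter_leq; lia.
have le_z := level_min (k := (level w).-1) ltac:(lia) z_N.
have : level w <= (level z).+1.
  by apply: level_min; [lia | apply/nbhdP; exists z; rewrite ?mem_level ?e_zw ?orbT].
by exists z; rewrite z_near e_zw andbT; apply/eqP; lia.
Qed.

Definition parent w :=
  odflt w [pick z | [&& z \in N K, level z == (level w).-1 & e z w]].

Lemma parentP w : w \in N K -> 0 < level w ->
  [/\ parent w \in N K, level (parent w) = (level w).-1 & e (parent w) w].
Proof.
move=> w_near level_gt0; rewrite /parent; case: pickP => [z /and3P [-> /eqP -> ->] //|].
by move=> none; have [z] := exists_parent w_near level_gt0; rewrite none.
Qed.

Lemma iter_parent w m : w \in N K -> m <= level w ->
  iter m parent w \in N K /\ level (iter m parent w) = level w - m.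
Proof.
move=> w_near; elim: m => [|m IHm] lt_m; first by rewrite subn0.
have [near level_eq] := IHm (ltnW lt_m).
have [] := parentP near; first by rewrite level_eq subn_gt0.
by rewrite iterS level_eq subnS => ->.
Qed.

Lemma iter_parent_root w : w \in N K -> iter (level w) parent w = v.
Proof.
move=> w_near; have [near level_eq] := iter_parent w_near (leqnn _).
by apply: level_eq0 near _; rewrite level_eq subnn.
Qed.

Variable X : {set V}.
Hypothesis X_near : X \subset N K.

Definition bfs_vertices :=
  v |: \bigcup_(x in X) [set iter (val m) parent x | m : 'I_(level x)].

Definition bfs_edges := [set [set w; parent w] | w in bfs_vertices :\ v].

Lemma bfs_verticesP w : reflect
  (w = v \/ exists2 x, x \in X & exists2 m, m < level x & w = iter m parent x)
  (w \in bfs_vertices).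
Proof.
apply: (iffP setU1P) =>
  [[-> | /bigcupP [x X_x /imsetP [m _ ->]]] | [-> | [x X_x [m lt_m ->]]]].
- by left.
- by right; exists x => //; exists m.
- by left.
- by right; apply/bigcupP; exists x => //; apply/imsetP; exists (Ordinal lt_m).
Qed.

Lemma bfs_vertices_near w : w \in bfs_vertices -> w \in N K.
Proof.
case/bfs_verticesP => [-> | [x /(subsetP X_near) x_near [m lt_m ->]]].
  by apply: subsetP (subset_nbhd_iter _ _ _) _ _; rewrite set11.
by have [] := iter_parent x_near (ltnW lt_m).
Qed.

Lemma bfs_parent w : w \in bfs_vertices -> w != v ->
  [/\ parent w \in bfs_vertices, 0 < level w,
      level (parent w) = (level w).-1 & e (parent w) w].
Proof.
move=> w_in w_neq; have w_near := bfs_vertices_near w_in.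
have level_gt0 : 0 < level w.
  by rewrite lt0n; apply: contra w_neq => /eqP /(level_eq0 w_near) ->.
have [_ level_par e_par] := parentP w_near level_gt0; split=> //.
case/bfs_verticesP: w_in w_neq => [-> | [x X_x [m lt_m ->]]]; first by rewrite eqxx.
move=> _; apply/bfs_verticesP; rewrite -iterS.
have [lt_m1 | ge_m1] := ltnP m.+1 (level x).
  by right; exists x => //; exists m.+1.
left; have -> : m.+1 = level x by apply/eqP; rewrite eqn_leq ge_m1 lt_m.
exact/iter_parent_root/(subsetP X_near).
Qed.

Lemma bfs_tadj_parent w : w \in bfs_vertices -> w != v -> tadj bfs_edges (parent w) w.
Proof.
move=> w_in w_neq; have [_ level_gt0 level_par _] := bfs_parent w_in w_neq.
apply/andP; split; last by rewrite setUC; apply: imset_f; rewrite in_setD1 w_neq.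
by apply: contraTneq level_gt0 => par_w; move: level_par; rewrite par_w; lia.
Qed.

Lemma bfs_tadj_max x y : tadj bfs_edges x y -> level y <= level x -> y = parent x.
Proof.
case/andP=> neq_xy /imsetP [w]; rewrite in_setD1 => /andP [w_neq w_in] edge_w.
have [_ level_gt0 level_par _] := bfs_parent w_in w_neq.
have /set2P x_eq : x \in [set w; parent w] by rewrite -edge_w set21.
have /set2P y_eq : y \in [set w; parent w] by rewrite -edge_w set22.
case: x_eq y_eq => -> [] -> in neq_xy *; rewrite ?eqxx // in neq_xy.
by rewrite level_par leqNgt ltn_predL level_gt0.
Qed.

Lemma bfs_path w : w \in bfs_vertices ->
  exists s, [/\ path (tadj bfs_edges) v s, last v s = w & size s = level w].
Proof.
move=> w_in; have [k level_w] : exists k, level w = k by exists (level w).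
elim: k w level_w w_in => [|k IHk] w level_w w_in.
  by exists [::]; rewrite level_w (level_eq0 (bfs_vertices_near w_in)).
have w_neq : w != v by apply/eqP => w_v; move: level_w; rewrite w_v level_root.
have [par_in _ level_par _] := bfs_parent w_in w_neq.
have [s [path_s last_s size_s]] := IHk _ (etrans level_par (congr1 _ level_w)) par_in.
exists (rcons s w); split; last by rewrite size_rcons size_s level_par level_w.
  by rewrite rcons_path path_s last_s bfs_tadj_parent.
by rewrite last_rcons.
Qed.

Lemma subgraph_bfs : subgraph_of e bfs_vertices bfs_edges.
Proof.
move=> E /imsetP [w]; rewrite in_setD1 => /andP [w_neq w_in] ->.
have [par_in _ _ e_par] := bfs_parent w_in w_neq.
exists w, (parent w); split=> //; last by rewrite e_sym.
by have /andP [] := bfs_tadj_parent w_in w_neq; rewrite eq_sym.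
Qed.

(* A vertex of maximal level on a cycle would have its parent on both sides. *)
Lemma bfs_acyclic (c : seq V) :
  uniq c -> 3 <= size c -> ~~ cycle (tadj bfs_edges) c.
Proof.
case: c => [|x0 c'] // uniq_c size_c; set c := x0 :: c' in uniq_c size_c *.
apply/negP => cycle_c.
have [x c_x x_max] := @arg_maxnP V x0 (fun y => y \in c) level (mem_head _ _).
have x_next : tadj bfs_edges x (next c x) := next_cycle cycle_c c_x.
have x_prev : tadj bfs_edges x (prev c x) by rewrite tadj_sym (prev_cycle cycle_c c_x).
have le_next : level (next c x) <= level x by apply: x_max; rewrite mem_next.
have le_prev : level (prev c x) <= level x by apply: x_max; rewrite mem_prev.
have := next_neq_prev uniq_c c_x size_c.
by rewrite (bfs_tadj_max x_next le_next) (bfs_tadj_max x_prev le_prev) eqxx.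
Qed.

Lemma bfs_root : v \in bfs_vertices.
Proof. exact: setU11. Qed.

Lemma bfs_is_tree : is_tree bfs_vertices bfs_edges.
Proof.
have from_v x : x \in bfs_vertices -> connect (tadj bfs_edges) v x.
  by case/bfs_path => s [path_s last_s _]; apply/connectP; exists s.
split; [by apply/set0Pn; exists v; apply: bfs_root | | exact: bfs_acyclic].
move=> x y /from_v v_x /from_v v_y; apply: connect_trans v_y.
by rewrite (sym_connect_sym (@tadj_sym _ _)).
Qed.

Lemma bfs_depth w : w \in bfs_vertices ->
  exists s, [/\ path (tadj bfs_edges) v s, last v s = w & size s <= K].
Proof.
move=> w_in; have [s [path_s last_s size_s]] := bfs_path w_in.
by exists s; rewrite size_s level_leq // bfs_vertices_near.
Qed.

Lemma sub_bfs_vertices : X \subset bfs_vertices.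
Proof.
apply/subsetP => x X_x; apply/bfs_verticesP.
have [/(level_eq0 (subsetP X_near x X_x)) -> | level_gt0] := posnP (level x).
  by left.
by right; exists x => //; exists 0.
Qed.

Lemma card_bfs_vertices : #|bfs_vertices| <= 1 + #|X| * K.
Proof.
rewrite cardsU1 leq_add ?leq_b1 //.
apply: (@leq_trans (\sum_(x in X) level x)).
  apply: (big_ind2 (fun (A : {set V}) n => #|A| <= n)) => [|A m B n le_A le_B|x _].
  - by rewrite cards0.
  - by apply: leq_trans (leq_card_setU A B) (leq_add le_A le_B).
  - by apply: leq_trans (leq_imset_card _ _) _; rewrite card_ord.
rewrite -sum1_card big_distrl /= leq_sum // => x X_x.
by rewrite mul1n level_leq // (subsetP X_near).
Qed.

End BfsTree.

Theorem lemma11 (V : finType) (e : rel V) (p : nat) (A : 'I_p -> {set V})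
    (l delta : nat) :
  simple_graph e ->
  2 <= #|V| ->
  1 <= p ->
  1 <= l ->
  (forall i, A i != set0) ->
  (exists (VT : {set V}) (ET : {set {set V}}),
      [/\ subgraph_of e VT ET, is_tree VT ET,
          tree_depth_le VT ET (4 * INR delta * INR l * ln (INR #|V|))%R,
          (INR #|VT| <= 4 * INR delta * INR l * INR p * ln (INR #|V|))%R
        & forall i, ~~ [disjoint VT & A i]])
  \/
  (exists S : {set V},
      (INR #|nbhd_iter e delta S :&: ~: S| < INR (minn #|S| #|~: S|) / INR l)%R /\
      (INR #|nbhd_iter e delta (~: S) :&: S| < INR (minn #|S| #|~: S|) / INR l)%R).
Proof.
move=> [e_sym _] V_gt1 p_gt0 l_gt0 A_neq0.
have /fin_all_exists [t t_A] : forall i, exists x, x \in A i by move=> i; apply/set0Pn.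
pose v := t (Ordinal p_gt0).
have [delta0 | delta_gt0] := posnP delta.
  by right; exists [set v]; rewrite delta0; apply: sparse_cut0; rewrite ?cards1.
have [[S cut_S] | no_cut] := classic (exists S, sparse_cut e delta l S).
  by right; exists S.
left; have expanding S := not_sparse_cut l_gt0 (fun cut => no_cut (ex_intro _ S cut)).
have [K [t_near K_bound]] := targets_near e_sym V_gt1 l_gt0 expanding t v.
pose X := [set t i | i : 'I_p].
have X_near : X \subset nbhd_iter e K [set v] by apply/subsetP => _ /imsetP [i _ ->].
have card_X : #|X| <= p by rewrite (leq_trans (leq_imset_card _ _)) ?card_ord.
exists (bfs_vertices e v K X), (bfs_edges e v K X); split.
- exact: subgraph_bfs.
- exact: bfs_is_tree.
- exists v; first exact: bfs_root.
  move=> w /(bfs_depth X_near) [s [path_s last_s size_s]]; exists s; split=> //.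
  apply: Rle_trans (le_INR_leq size_s) _.
  by rewrite plus_INR in K_bound; have := pos_INR delta; lra.
- have card_le : #|bfs_vertices e v K X| <= p * (K + delta).
    by apply: leq_trans (card_bfs_vertices X_near) _; nia.
  apply: Rle_trans (le_INR_leq card_le) _; rewrite mult_INR.
  by have := pos_INR p; nra.
- move=> i; have t_in : t i \in bfs_vertices e v K X.
    by rewrite (subsetP (sub_bfs_vertices X_near)) // imset_f.
  by apply/negP => /disjointFr /(_ t_in); rewrite t_A.
Qed.
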